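(* Let $n\ge 1$ and let $X_1,\dots,X_n$ be positive random variables that are jointly continuously distributed, such that each $X_k$ has an absolutely continuous distribution function $F_k$. Let $s>0$ and let $t=t(n,s)>0$ be the unique solution of $$\sum_{k=1}^n \int_0^{t} x\, dF_k(x) = s.$$ Let $N(n,s)$ and $S_{A(n,s)}$ be as defined in the context. Then $$\mathrm E(N(n,s)) \le \sum_{k=1}^n F_k(t(n,s)) - \frac{s-\mathrm E(S_{A(n,s)})}{t(n,s)}.$$
   Context: Define a total order on $\{X_1,\dots,X_n\}$ by $X_i\prec X_j$ if either $X_i<X_j$, or $X_i=X_j$ and $i<j$. Let $\pi$ be the unique permutation of $\{1,\dots,n\}$ with $X_{\pi(1)}\prec X_{\pi(2)}\prec\cdots\prec X_{\pi(n)}$. Let $A(n,s)=\{\pi(1),\dots,\pi(k)\}$ where $k$ is the largest integer in $\{0,1,\dots,n\}$ with $X_{\pi(1)}+\cdots+X_{\pi(k)}\le s$ (so $A(n,s)=\emptyset$ if $X_{\pi(1)}>s$). Then $N(n,s)=|A(n,s)|$ is the maximum number of observations among $X_1,\dots,X_n$ whose sum does not exceed $s$, and $S_{A(n,s)}=\sum_{i\in A(n,s)} X_i$. *)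

From HB Require Import structures.
From mathcomp Require Import all_boot all_order all_algebra.
From mathcomp Require Import all_classical all_reals all_analysis.
Set Implicit Arguments. Unset Strict Implicit. Unset Printing Implicit Defensive.
Import Order.TTheory GRing.Theory Num.Theory.
Local Open Scope classical_set_scope.
Local Open Scope ring_scope.

Section defs.
Variables (R : realType) (n : nat).

Definition prec_idx (x : 'I_n -> R) : rel 'I_n :=
  fun i j => (x i < x j) || ((x i == x j) && (i <= j)%N).

Definition sorted_idx (x : 'I_n -> R) : seq 'I_n := sort (prec_idx x) (enum 'I_n).

Definition kmax (x : 'I_n -> R) (s : R) : nat :=
  \max_(k < n.+1 | \sum_(i <- take k (sorted_idx x)) x i <= s) k.

Definition Aset (x : 'I_n -> R) (s : R) : {set 'I_n} :=
  [set i in take (kmax x s) (sorted_idx x)].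

Definition Ncount (x : 'I_n -> R) (s : R) : nat := #|Aset x s|.

Definition SA (x : 'I_n -> R) (s : R) : R := \sum_(i in Aset x s) x i.

Definition lebesgue_null (B : set ('I_n -> R)) : Prop :=
  forall e : R, 0 < e -> exists a b : nat -> 'I_n -> R,
    (forall j i, a j i <= b j i) /\
    B `<=` \bigcup_j [set x | forall i, a j i <= x i <= b j i] /\
    (forall m, \sum_(j < m) \prod_(i < n) (b j i - a j i) <= e).
End defs.

Definition abs_cont_fun (R : realType) (F : R -> R) : Prop :=
  forall e : R, 0 < e -> exists2 d : R, 0 < d &
    forall (m : nat) (a b : 'I_m -> R),
      (forall i, a i <= b i) ->
      (forall i j, i != j -> (b i <= a j) || (b j <= a i)) ->
      \sum_(i < m) (b i - a i) < d ->
      \sum_(i < m) `|F (b i) - F (a i)| < e.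

Definition distr_fun d (T : measurableType d) (R : realType)
  (P : probability T R) (Y : T -> R) (x : R) : R :=
  fine (P [set w | Y w <= x]).

From HB Require Import structures.
From mathcomp Require Import all_boot all_order all_algebra.
From mathcomp Require Import all_classical all_reals all_analysis.
From mathcomp Require Import measurable_realfun lra.
Import Order.TTheory GRing.Theory Num.Theory.
Local Open Scope classical_set_scope.
Local Open Scope ring_scope.

(* For an index i and an outcome w put a = [i \in A(n,s)] and b = [X_i <= t].
   Since b maximises c (1 - X_i / t) over c in {0, 1}, we have
   a (1 - X_i / t) <= b (1 - X_i / t) pointwise.  Taking expectations and
   summing over i gives E N - E S_A / t <= sum_k F_k(t) - s / t, because
   E[X_k; X_k <= t] = int_0^t x dF_k(x) and these sum to s. *)

Section bool_measurability.
Context {d} {T : measurableType d} {R : realType}.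

Lemma measurable_natr_bool (b : T -> bool) :
  measurable_fun setT b -> measurable_fun setT (fun w => (b w)%:R : R).
Proof.
move=> mb; rewrite (_ : (fun w => _) = fun w => if b w then 1 else 0).
  exact: measurable_fun_ifT.
by apply/funext => w; case: (b w).
Qed.

Lemma measurable_fun_ffun_bool {d'} {T' : measurableType d'} {I : finType}
    (b : I -> T -> bool) (G : {ffun I -> bool} -> T') :
  (forall i, measurable_fun setT (b i)) ->
  measurable_fun setT (fun w => G [ffun i => b i w]).
Proof.
move=> mb _ Y mY; rewrite setTI.
have -> : (fun w => G [ffun i => b i w]) @^-1` Y =
    \bigcup_(v in [set v | Y (G v)]) \bigcap_(i in [set: I]) b i @^-1` [set v i].
  apply/seteqP; split => w /=.
    by move=> Yw; exists [ffun i => b i w] => //= i _; rewrite ffunE.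
  move=> [v /= Yv bv]; suff -> : [ffun i => b i w] = v by [].
  by apply/ffunP => i; rewrite ffunE; exact: bv.
apply: fin_bigcup_measurable; first exact: finite_finset.
move=> v _; apply: fin_bigcap_measurable; first exact: finite_finset.
by move=> i _; rewrite -[_ @^-1` _]setTI; exact: mb.
Qed.

End bool_measurability.

Section Aset_pattern.
Context {R : realType} {n : nat}.

(* [Aset x s] depends on [x] only through the finitely many booleans
   [prec_idx x i j] and [\sum_(i in B) x i <= s], which makes membership in
   A(n,s) a measurable event. *)
Definition Aset_pattern (x : 'I_n -> R) (s : R)
    (p : ('I_n * 'I_n) + {set 'I_n}) : bool :=
  match p with
  | inl (i, j) => prec_idx x i j
  | inr B => \sum_(i in B) x i <= s
  end.

Definition Aset_of_pattern (v : {ffun ('I_n * 'I_n) + {set 'I_n} -> bool}) :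
    {set 'I_n} :=
  let L := sort (fun i j => v (inl (i, j))) (enum 'I_n) in
  [set i in take (\max_(k < n.+1 | v (inr [set i in take k L])) k) L].

Lemma Aset_of_patternE x s :
  Aset_of_pattern [ffun p => Aset_pattern x s p] = Aset x s.
Proof.
rewrite /Aset_of_pattern /Aset /kmax /sorted_idx.
have -> : (fun i j => [ffun p => Aset_pattern x s p] (inl (i, j))) = prec_idx x.
  by apply/funext => i; apply/funext => j; rewrite ffunE.
congr [set _ in take _ _]; apply/funext => _; apply: eq_bigl => k.
rewrite ffunE /= (big_uniq _ (take_uniq _ _)) ?sort_uniq ?enum_uniq //.
by congr (_ <= _); apply: eq_bigl => i; rewrite inE.
Qed.

Lemma measurable_mem_Aset {d} {T : measurableType d} (X : 'I_n -> T -> R) s i :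
  (forall k, measurable_fun setT (X k)) ->
  measurable_fun setT (fun w => i \in Aset (fun k => X k w) s).
Proof.
move=> mX; pose b p w := Aset_pattern (X^~ w) s p.
rewrite (_ : (fun w => _) = fun w => i \in Aset_of_pattern [ffun p => b p w]);
  last by apply/funext => w; rewrite Aset_of_patternE.
apply: (measurable_fun_ffun_bool b (fun v => i \in Aset_of_pattern v)).
case=> [[j k]|B]; rewrite /b /=.
- apply: measurable_or; first exact: measurable_fun_ltr.
  by apply: measurable_and; first exact: measurable_fun_eqr.
- apply: measurable_fun_ler => //.
  under eq_fun do rewrite big_mkcond /=.
  by apply: measurable_sum => k; case: (k \in B).
Qed.

End Aset_pattern.

(* [b (1 - x / t) <= (x <= t) (1 - x / t)], stated without subtraction so
   that it can be integrated in [\bar R]. *)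
Lemma bool_gain_le_threshold (R : realFieldType) (b : bool) (x t : R) : 0 < t ->
  b%:R + t^-1 * (x * (x <= t)%R%:R) <= (x <= t)%R%:R + t^-1 * (x * b%:R).
Proof.
move=> t0; case: (lerP x t) => hx; case: b; rewrite /= ?mulr0 ?mulr1 ?addr0 ?add0r //.
- by rewrite mulrC ler_pdivrMr // mul1r.
- by rewrite mulrC ler_pdivlMr // mul1r ltW.
Qed.

Lemma lee_subr_mul_of_addr (R : realDomainType) (a e : \bar R) (F s c : R) :
  0 < c -> (a + (c * s)%:E <= F%:E + c%:E * e)%E ->
  (a <= F%:E - (s%:E - e) * c%:E)%E.
Proof.
move=> c0; case: e => [e| |] /=.
- case: a => [a| |] //=; rewrite -!EFinM -!EFinD ?lee_fin ?leNye // => h.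
  by rewrite mulrBl (mulrC s) (mulrC e); lra.
- by move=> _; rewrite addeNy gt0_mulNye ?lte_fin // leey.
- rewrite gt0_muleNy ?lte_fin // addeNy leeNy_eq.
  by case: a => [a| |] // _; rewrite leNye.
Qed.

Section integrals.
Context {d} {T : measurableType d} {R : realType}.
Implicit Types (mu : {measure set T -> \bar R}) (P : probability T R).

Lemma ge0_integralDZr mu (f g : T -> R) (k : R) : 0 <= k ->
  (forall w, 0 <= f w) -> (forall w, 0 <= g w) ->
  measurable_fun setT f -> measurable_fun setT g ->
  (\int[mu]_w (f w)%:E + k%:E * \int[mu]_w (g w)%:E =
   \int[mu]_w (f w + k * g w)%:E)%E.
Proof.
move=> k0 f0 g0 mf mg.
have mfE := (measurable_EFinP setT f).2 mf.
have mgE := (measurable_EFinP setT g).2 mg.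
rewrite -ge0_integralZl //; last by move=> w _; rewrite lee_fin.
rewrite -ge0_integralD //; first by move=> w _; rewrite lee_fin.
- by move=> w _; rewrite -EFinM lee_fin mulr_ge0.
- exact: measurable_funeM.
Qed.

Lemma integral_bool_gain_le_threshold mu (x : T -> R) (b : T -> bool) (t : R) :
  0 < t -> (forall w, 0 <= x w) ->
  measurable_fun setT x -> measurable_fun setT b ->
  (\int[mu]_w (b w)%:R%:E + t^-1%:E * \int[mu]_w (x w * (x w <= t)%R%:R)%:E <=
   \int[mu]_w (x w <= t)%R%:R%:E + t^-1%:E * \int[mu]_w (x w * (b w)%:R)%:E)%E.
Proof.
move=> t0 x0 mx mb; have t1 : 0 <= t^-1 by rewrite invr_ge0 ltW.
have mxt : measurable_fun setT (fun w => (x w <= t)%R%:R : R).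
  by apply: measurable_natr_bool; exact: measurable_fun_ler.
have mxb : measurable_fun setT (fun w => (b w)%:R : R).
  exact: measurable_natr_bool.
rewrite !ge0_integralDZr //; try by move=> w; rewrite ?mulr_ge0.
  apply: ge0_le_integral => //.
  - by move=> w _; rewrite lee_fin addr_ge0 ?mulr_ge0.
  - apply/measurable_EFinP/measurable_funD => //.
    by apply: measurable_funM => //; exact: measurable_funM.
  - apply/measurable_EFinP/measurable_funD => //.
    by apply: measurable_funM => //; exact: measurable_funM.
  - by move=> w _; rewrite lee_fin bool_gain_le_threshold.
all: exact: measurable_funM.
Qed.

Lemma expectation_sum_random_set P (I : finType) (A : T -> {set I})
    (f : I -> T -> R) :
  (forall i, measurable_fun setT (fun w => i \in A w)) ->
  (forall i, measurable_fun setT (f i)) -> (forall i w, 0 <= f i w) ->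
  ('E_P[fun w => (\sum_(i in A w) f i w)%R] =
   \sum_i \int[P]_w (f i w * (i \in A w)%:R)%:E)%E.
Proof.
move=> mA mf f0; rewrite expectation.unlock -ge0_integral_sum //.
- apply: eq_integral => w _; rewrite sumEFin big_mkcond /=; congr EFin.
  by apply: eq_bigr => i _; case: (i \in A w); rewrite ?mulr1 ?mulr0.
- move=> i; apply/measurable_EFinP/measurable_funM => //.
  exact: measurable_natr_bool.
- by move=> i w _; rewrite lee_fin mulr_ge0.
Qed.

Lemma integral_ler_distr_fun P (X : {RV P >-> R}) (t : R) :
  (\int[P]_w (X w <= t)%R%:R%:E = (distr_fun P X t)%:E)%E.
Proof.
have mS : measurable [set w | X w <= t].
  rewrite (_ : [set w | _] = X @^-1` `]-oo, t]); first exact: measurable_funPTI.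
  by apply/seteqP; split => w /=; rewrite in_itv.
rewrite (_ : (fun w => _) = fun w => (\1_[set w | X w <= t] w)%:E); last first.
  by apply/funext => w; rewrite indicE mem_setE.
by rewrite integral_indic // setIT /distr_fun fineK // fin_num_measure.
Qed.

Lemma integral_distribution_itv0 P (X : {RV P >-> R}) (t : R) :
  (forall w, 0 <= X w) ->
  (\int[distribution P X]_(x in `[0%R, t]) x%:E =
   \int[P]_w (X w * (X w <= t)%R%:R)%:E)%E.
Proof.
move=> X0; rewrite integral_mkcond ge0_integral_distribution.
- apply: eq_integral => w _ /=; rewrite /patch mem_setE in_itv /= X0.
  by case: (X w <= t)%R; rewrite ?mulr1 ?mulr0.
- rewrite (_ : EFin \_ _ = fun x => (x * \1_`[0%R, t] x)%:E); last first.
    by apply/funext => x; rewrite /patch indicE; case: (_ \in _); rewrite ?mulr1 ?mulr0.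
  by apply/measurable_EFinP/measurable_funM => //; exact: measurable_indic.
- by move=> x; rewrite /patch; case: ifP => //; rewrite mem_setE in_itv /= => /andP[].
Qed.

End integrals.

Theorem theorem3 (d : measure_display) (T : measurableType d) (R : realType)
  (P : probability T R) (n : nat) (X : 'I_n -> {RV P >-> R}) (s t : R) :
  (1 <= n)%N ->
  (forall k w, 0 < X k w) ->
  (* jointly continuously distributed *)
  (forall B : set ('I_n -> R), lebesgue_null B ->
     P.-negligible [set w | B (fun k => X k w)]) ->
  (* each F_k absolutely continuous *)
  (forall k, abs_cont_fun (distr_fun P (X k))) ->
  0 < s ->
  0 < t ->
  (* t = t(n,s) is the unique solution of sum_k int_0^t x dF_k(x) = s *)
  (\sum_(k < n) \int[distribution P (X k)]_(x in `[0%R, t]%classic) x%:E)%E = s%:E ->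
  (forall t', 0 < t' ->
     (\sum_(k < n) \int[distribution P (X k)]_(x in `[0%R, t']%classic) x%:E)%E = s%:E ->
     t' = t) ->
  ('E_P[fun w => (Ncount (fun k => X k w) s)%:R]
    <= (\sum_(k < n) distr_fun P (X k) t)%:E
       - (s%:E - 'E_P[fun w => SA (fun k => X k w) s]) * (t^-1)%:E)%E.
Proof.
move=> _ Xpos _ _ s0 t0 hs _.
have mX k : measurable_fun setT (X k) := measurable_funP (X k).
have X0 k w : 0 <= X k w := ltW (Xpos k w).
have mA i := measurable_mem_Aset _ s i mX.
rewrite (_ : (fun w => _) = fun w => \sum_(i in Aset (fun k => X k w) s) 1);
  last by apply/funext => w; rewrite sumr_const.
rewrite !expectation_sum_random_set //.
apply: lee_subr_mul_of_addr; first by rewrite invr_gt0.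
rewrite EFinM -hs -sumEFin !ge0_sume_distrr; last 2 first.
- by move=> k _; apply: integral_ge0 => w _; rewrite lee_fin mulr_ge0.
- by move=> k _; apply: integral_ge0 => x /=; rewrite in_itv lee_fin => /andP[].
rewrite -!big_split /=; apply: lee_sum => k _.
rewrite integral_distribution_itv0 // -integral_ler_distr_fun.
under eq_integral do rewrite mul1r.
exact: integral_bool_gain_le_threshold.
Qed.
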